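(* Let $(A^1,B^1)$ be an $n_1\times m_1$ bimatrix game, $(A^2,B^2)$ an $n_2\times m_2$ bimatrix game, $K$ a real number with $K>|c|$ for every entry $c$ of $A^1,B^1,A^2,B^2$, and let $(A,B)$ be the sum game $(A^1,B^1)+(A^2,B^2)$ via $K$. If $(x,y)$ is a Nash equilibrium of $(A,B)$, then $(x^1,y^1)$ defined by $x^1_i=x_i/\sum_{l=1}^{n_1}x_l$ for $1\le i\le n_1$ and $y^1_j=y_j/\sum_{l=1}^{m_1}y_l$ for $1\le j\le m_1$ is well-defined and is a Nash equilibrium of $(A^1,B^1)$.
   Context: An $n\times m$ bimatrix game $(A,B)$ consists of two real $n\times m$ matrices. A mixed strategy of the row player is a probability vector $x\in\Delta_n=\{x\in\mathbb{R}^n_{\ge 0}:\sum_i x_i=1\}$, of the column player $y\in\Delta_m$; the expected payoffs are $x^TAy$ (row player) and $x^TBy$ (column player). $(x,y)$ is a Nash equilibrium if $x^TAy\ge \hat x^TAy$ for all $\hat x\in\Delta_n$ and $x^TBy\ge x^TB\hat y$ for all $\hat y\in\Delta_m$. The sum game $(A^1,B^1)+(A^2,B^2)$ via $K$ is the $(n_1+n_2)\times(m_1+m_2)$ game $(A,B)$ with $A_{ij}=A^1_{ij}$, $B_{ij}=B^1_{ij}$ if $i\le n_1,j\le m_1$; $A_{ij}=A^2_{i-n_1,j-m_1}$, $B_{ij}=B^2_{i-n_1,j-m_1}$ if $i>n_1,j>m_1$; and $A_{ij}=K$, $B_{ij}=-K$ otherwise. *)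

From mathcomp Require Import all_boot all_order all_algebra.
Set Implicit Arguments. Unset Strict Implicit. Unset Printing Implicit Defensive.
Import Order.TTheory GRing.Theory Num.Theory.
Local Open Scope ring_scope.

Definition mixed (R : realFieldType) (n : nat) (x : 'cV[R]_n) : Prop :=
  (forall i, 0 <= x i 0) /\ \sum_i x i 0 = 1.

Definition payoff (R : realFieldType) (n m : nat)
  (x : 'cV[R]_n) (M : 'M[R]_(n, m)) (y : 'cV[R]_m) : R :=
  (x^T *m M *m y) 0 0.

Definition nash_eq (R : realFieldType) (n m : nat)
  (A B : 'M[R]_(n, m)) (x : 'cV[R]_n) (y : 'cV[R]_m) : Prop :=
  mixed x /\ mixed y /\
  (forall xh : 'cV[R]_n, mixed xh -> payoff xh A y <= payoff x A y) /\
  (forall yh : 'cV[R]_m, mixed yh -> payoff x B yh <= payoff x B y).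

Definition sumA (R : realFieldType) (n1 m1 n2 m2 : nat)
  (A1 : 'M[R]_(n1, m1)) (A2 : 'M[R]_(n2, m2)) (K : R) : 'M[R]_(n1 + n2, m1 + m2) :=
  block_mx A1 (const_mx K) (const_mx K) A2.

Definition sumB (R : realFieldType) (n1 m1 n2 m2 : nat)
  (B1 : 'M[R]_(n1, m1)) (B2 : 'M[R]_(n2, m2)) (K : R) : 'M[R]_(n1 + n2, m1 + m2) :=
  block_mx B1 (const_mx (- K)) (const_mx (- K)) B2.

Definition restrict_norm (R : realFieldType) (n1 n2 : nat)
  (x : 'cV[R]_(n1 + n2)) : 'cV[R]_n1 :=
  \col_i (x (lshift n2 i) 0 / \sum_(l < n1) x (lshift n2 l) 0).

From mathcomp Require Import all_boot all_order all_algebra.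
From mathcomp Require Import ring lra.
Set Implicit Arguments. Unset Strict Implicit. Unset Printing Implicit Defensive.
Import Order.TTheory GRing.Theory Num.Theory.
Local Open Scope ring_scope.

(* Since K exceeds every payoff in absolute value, the off-diagonal blocks
   reward the row player and punish the column player more than any diagonal
   entry. If the column player put no mass on the first block, the row player
   would strictly prefer the first block, which in turn would make the column
   player strictly prefer the first block; symmetric reasoning excludes the row
   player avoiding the first block. So both players put positive mass on the
   first block, and as the off-diagonal payoffs are constant, a profitable
   deviation inside the first game would lift to one in the sum game. *)

Section Payoff.
Variable R : realFieldType.

Definition mass n (a : 'cV[R]_n) : R := \sum_i a i 0.

Definition best_response n m (M : 'M[R]_(n, m)) (b : 'cV[R]_m) (a : 'cV[R]_n) :=
  forall ah, mixed ah -> payoff ah M b <= payoff a M b.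

Lemma massD n (a c : 'cV[R]_n) : mass (a + c) = mass a + mass c.
Proof. by rewrite /mass -big_split; apply: eq_bigr => i _; rewrite mxE. Qed.

Lemma massZ n k (a : 'cV[R]_n) : mass (k *: a) = k * mass a.
Proof. by rewrite /mass mulr_sumr; apply: eq_bigr => i _; rewrite mxE. Qed.

Lemma mass_delta n (k : 'I_n) : mass (delta_mx k 0) = 1.
Proof.
rewrite /mass (bigD1 k) //= big1 => [|i /negbTE ne_ik]; rewrite mxE ?ne_ik //.
by rewrite !eqxx addr0.
Qed.

Lemma mass_col n1 n2 (a1 : 'cV[R]_n1) (a2 : 'cV[R]_n2) :
  mass (col_mx a1 a2) = mass a1 + mass a2.
Proof.
by rewrite /mass big_split_ord; congr (_ + _); apply: eq_bigr => i _;
  rewrite ?col_mxEu ?col_mxEd.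
Qed.

Lemma mass_ge0 n (a : 'cV[R]_n) : (forall i, 0 <= a i 0) -> 0 <= mass a.
Proof. by move=> a_ge0; apply: sumr_ge0. Qed.

Lemma mass_eq0 n (a : 'cV[R]_n) : (forall i, 0 <= a i 0) -> mass a = 0 -> a = 0.
Proof.
move=> a_ge0 a_mass0; apply/matrixP => i j; rewrite (ord1 j) mxE.
exact: (psumr_eq0P (P := predT) (F := fun i => a i 0)).
Qed.

Lemma mixed_col n1 n2 (a1 : 'cV[R]_n1) (a2 : 'cV[R]_n2) :
  mixed (col_mx a1 a2) <->
  [/\ forall i, 0 <= a1 i 0, forall i, 0 <= a2 i 0 & mass a1 + mass a2 = 1].
Proof.
split=> [[a_ge0 a_mass1]|[a1_ge0 a2_ge0 a_mass1]].
  split; last by rewrite -mass_col.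
  - by move=> i; have := a_ge0 (lshift n2 i); rewrite col_mxEu.
  - by move=> i; have := a_ge0 (rshift n1 i); rewrite col_mxEd.
split; last by rewrite -a_mass1 -mass_col.
by move=> i; rewrite -(splitK i); case: (split i) => k /=;
  rewrite ?col_mxEu ?col_mxEd.
Qed.

Lemma mixed_normalize n (a : 'cV[R]_n) :
  (forall i, 0 <= a i 0) -> 0 < mass a -> mixed ((mass a)^-1 *: a).
Proof.
move=> a_ge0 a_pos; split=> [i|]; first by rewrite mxE mulr_ge0 // invr_ge0 ltW.
by rewrite -/(mass _) massZ mulVf ?gt_eqF.
Qed.

Lemma payoffE n m (a : 'cV[R]_n) (M : 'M[R]_(n, m)) b :
  payoff a M b = \sum_i a i 0 * (M *m b) i 0.
Proof. by rewrite /payoff -mulmxA mxE; apply: eq_bigr => i _; rewrite mxE. Qed.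

Lemma payoffDl n m (a c : 'cV[R]_n) (M : 'M[R]_(n, m)) b :
  payoff (a + c) M b = payoff a M b + payoff c M b.
Proof. by rewrite !payoffE -big_split; apply: eq_bigr => i _; rewrite mxE mulrDl. Qed.

Lemma payoffZl n m k (a : 'cV[R]_n) (M : 'M[R]_(n, m)) b :
  payoff (k *: a) M b = k * payoff a M b.
Proof. by rewrite !payoffE mulr_sumr; apply: eq_bigr => i _; rewrite mxE mulrA. Qed.

Lemma payoffZr n m k (a : 'cV[R]_n) (M : 'M[R]_(n, m)) b :
  payoff a M (k *: b) = k * payoff a M b.
Proof. by rewrite /payoff -scalemxAr mxE. Qed.

Lemma payoff_delta n m (k : 'I_n) (M : 'M[R]_(n, m)) b :
  payoff (delta_mx k 0) M b = (M *m b) k 0.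
Proof. by rewrite /payoff trmx_delta -mulmxA -rowE mxE. Qed.

Lemma payoff_tr n m (a : 'cV[R]_n) (M : 'M[R]_(n, m)) b :
  payoff a M b = payoff b M^T a.
Proof.
rewrite /payoff -[in LHS](trmxK (a^T *m M *m b)) [in LHS]mxE.
by rewrite !trmx_mul trmxK mulmxA.
Qed.

Lemma payoff_block n1 n2 m1 m2 (a1 : 'cV[R]_n1) (a2 : 'cV[R]_n2)
    (b1 : 'cV[R]_m1) (b2 : 'cV[R]_m2) A B C D :
  payoff (col_mx a1 a2) (block_mx A B C D) (col_mx b1 b2) =
  payoff a1 A b1 + payoff a1 B b2 + payoff a2 C b1 + payoff a2 D b2.
Proof. by rewrite /payoff tr_col_mx mul_row_block mul_row_col !mulmxDl !mxE; ring. Qed.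

Lemma const_mx_mul n m c (b : 'cV[R]_m) (i : 'I_n) :
  (const_mx c *m b) i 0 = c * mass b.
Proof. by rewrite mxE mulr_sumr; apply: eq_bigr => j _; rewrite mxE. Qed.

Lemma payoff_const n m (a : 'cV[R]_n) (b : 'cV[R]_m) c :
  payoff a (const_mx c) b = c * mass a * mass b.
Proof.
rewrite payoffE mulrAC mulr_sumr; apply: eq_bigr => i _.
by rewrite const_mx_mul; ring.
Qed.

Lemma nash_eqE n m (A B : 'M[R]_(n, m)) x y :
  nash_eq A B x y <->
  mixed x /\ mixed y /\ best_response A y x /\ best_response B^T x y.
Proof.
have trE yh : payoff x B yh = payoff yh B^T x := payoff_tr x B yh.
by split=> [] [x_mixed [y_mixed [x_best y_best]]]; do 3!split=> //;
  move=> yh /y_best; rewrite !trE.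
Qed.

Lemma best_responseZ n m (M : 'M[R]_(n, m)) b a k :
  0 <= k -> best_response M b a -> best_response M (k *: b) a.
Proof.
by move=> k_ge0 a_best ah ah_mixed; rewrite !payoffZr ler_wpM2l ?a_best.
Qed.

Lemma mulmx_mixed_lt n m (M : 'M[R]_(n, m)) b i c :
  mixed b -> (forall j, M i j < c) -> (M *m b) i 0 < c.
Proof.
move=> [b_ge0 b_mass1] lt_Mc.
pose gap := \sum_j (c - M i j) * b j 0.
have -> : (M *m b) i 0 = c - gap.
  rewrite mxE /gap (eq_bigr _ (fun j _ => mulrBl _ _ _)) sumrB -mulr_sumr b_mass1.
  by rewrite mulr1 subKr.
have gap_ge0 j : true -> 0 <= (c - M i j) * b j 0.
  by move=> _; rewrite mulr_ge0 // subr_ge0 ltW.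
suff : 0 < gap by lra.
rewrite lt0r sumr_ge0 // andbT; apply/eqP => gap0.
have b0 j : b j 0 = 0.
  move: (psumr_eq0P gap_ge0 gap0 (i := j) isT) => /eqP.
  by rewrite mulf_eq0 subr_eq0 gt_eqF //= => /eqP.
by move: b_mass1; rewrite big1 // => /esym/eqP; rewrite oner_eq0.
Qed.

Lemma mulmx_mixed_gt n m (M : 'M[R]_(n, m)) b i c :
  mixed b -> (forall j, c < M i j) -> c < (M *m b) i 0.
Proof.
move=> b_mixed lt_cM.
have := mulmx_mixed_lt (M := - M) (i := i) (c := - c) b_mixed.
by rewrite mulNmx mxE ltrN2; apply=> j; rewrite mxE ltrN2.
Qed.

(* Shifting the weight of row [i] onto row [k] would gain [a_i (v_k - v_i)],
   where [v := M *m b]. *)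
Lemma best_response_support n m (M : 'M[R]_(n, m)) b a i k :
  mixed a -> best_response M b a -> (M *m b) i 0 < (M *m b) k 0 -> a i 0 = 0.
Proof.
move=> [a_ge0 a_mass1] a_best lt_ik; rewrite -/(mass a) in a_mass1.
have ne_ik : i != k by apply: contraTneq lt_ik => ->; rewrite ltxx.
pose d := a i 0.
pose ah := a + d *: delta_mx k 0 + (- d) *: delta_mx i 0.
have ah_mixed : mixed ah.
  split=> [j|]; last by rewrite -/(mass _) !massD !massZ !mass_delta a_mass1; lra.
  rewrite !mxE eqxx !andbT; case: (eqVneq j i) => [->|ne_ji].
    by rewrite (negbTE ne_ik) /= mulr0 mulr1 addr0 subrr.
  by rewrite mulr0 addr0 addr_ge0 ?mulr_ge0 ?a_ge0 ?ler0n.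
have := a_best _ ah_mixed.
rewrite !payoffDl !payoffZl !payoff_delta -/d.
have := a_ge0 i; rewrite -/d; nra.
Qed.

Section SumGame.
Variables (n1 n2 m1 m2 : nat) (M1 : 'M[R]_(n1.+1, m1)) (M2 : 'M[R]_(n2.+1, m2)).
Variables (c : R) (a1 : 'cV[R]_n1.+1) (a2 : 'cV[R]_n2.+1).
Variables (b1 : 'cV[R]_m1) (b2 : 'cV[R]_m2).
Local Notation G := (block_mx M1 (const_mx c) (const_mx c) M2).
Hypothesis a_mixed : mixed (col_mx a1 a2).
Hypothesis b_mixed : mixed (col_mx b1 b2).
Hypothesis a_best : best_response G (col_mx b1 b2) (col_mx a1 a2).

Lemma sum_game_mul_up i :
  (G *m col_mx b1 b2) (lshift n2.+1 i) 0 = (M1 *m b1) i 0 + c * mass b2.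
Proof. by rewrite mul_block_col col_mxEu [LHS]mxE const_mx_mul. Qed.

Lemma sum_game_mul_down i :
  (G *m col_mx b1 b2) (rshift n1.+1 i) 0 = c * mass b1 + (M2 *m b2) i 0.
Proof. by rewrite mul_block_col col_mxEd [LHS]mxE const_mx_mul. Qed.

Lemma best_response_up_eq0 :
  (forall i, (G *m col_mx b1 b2) (lshift n2.+1 i) 0 <
             (G *m col_mx b1 b2) (rshift n1.+1 ord0) 0) ->
  mass a1 = 0.
Proof.
move=> beaten; apply: big1 => i _.
by have := best_response_support a_mixed a_best (beaten i); rewrite col_mxEu.
Qed.

Lemma best_response_down_eq0 :
  (forall i, (G *m col_mx b1 b2) (rshift n1.+1 i) 0 <
             (G *m col_mx b1 b2) (lshift n2.+1 ord0) 0) ->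
  mass a2 = 0.
Proof.
move=> beaten; apply: big1 => i _.
by have := best_response_support a_mixed a_best (beaten i); rewrite col_mxEd.
Qed.

Lemma mass_down_eq0_of_offdiag_gt :
  (forall i j, M2 i j < c) -> mass b1 = 0 -> mass a2 = 0.
Proof.
move=> lt_M2c b1_mass0.
have [b1_ge0 b2_ge0 b_mass1] := iffLR (mixed_col _ _) b_mixed.
have b2_mixed : mixed b2 by split=> //; rewrite -/(mass _); lra.
apply: best_response_down_eq0 => i.
rewrite sum_game_mul_up sum_game_mul_down b1_mass0 (mass_eq0 b1_ge0 b1_mass0).
rewrite mulmx0 [X in X + c * _]mxE mulr0 !add0r (_ : mass b2 = 1) ?mulr1; last by lra.
exact: mulmx_mixed_lt.
Qed.

Lemma mass_up_eq0_of_offdiag_lt :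
  (forall i j, c < M2 i j) -> mass b1 = 0 -> mass a1 = 0.
Proof.
move=> lt_cM2 b1_mass0.
have [b1_ge0 b2_ge0 b_mass1] := iffLR (mixed_col _ _) b_mixed.
have b2_mixed : mixed b2 by split=> //; rewrite -/(mass _); lra.
apply: best_response_up_eq0 => i.
rewrite sum_game_mul_up sum_game_mul_down b1_mass0 (mass_eq0 b1_ge0 b1_mass0).
rewrite mulmx0 [X in X + c * _]mxE mulr0 !add0r (_ : mass b2 = 1) ?mulr1; last by lra.
exact: mulmx_mixed_gt.
Qed.

Lemma mass_down_eq0_of_offdiag_lt :
  (forall i j, c < M1 i j) -> mass b2 = 0 -> mass a2 = 0.
Proof.
move=> lt_cM1 b2_mass0.
have [b1_ge0 b2_ge0 b_mass1] := iffLR (mixed_col _ _) b_mixed.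
have b1_mixed : mixed b1 by split=> //; rewrite -/(mass _); lra.
apply: best_response_down_eq0 => i.
rewrite sum_game_mul_up sum_game_mul_down b2_mass0 (mass_eq0 b2_ge0 b2_mass0).
rewrite mulmx0 [X in c * _ + X]mxE mulr0 !addr0 (_ : mass b1 = 1) ?mulr1; last by lra.
exact: mulmx_mixed_gt.
Qed.

(* Replacing [a1] by [mass a1 *: z] leaves the off-diagonal payoffs unchanged. *)
Lemma best_response_restrict_up :
  0 < mass a1 -> best_response M1 b1 ((mass a1)^-1 *: a1).
Proof.
move=> a1_pos z [z_ge0 z_mass1]; rewrite -/(mass z) in z_mass1.
have [a1_ge0 a2_ge0 a_mass1] := iffLR (mixed_col _ _) a_mixed.
have dev_mixed : mixed (col_mx (mass a1 *: z) a2).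
  apply/mixed_col; split=> // [i|]; first by rewrite mxE mulr_ge0 // ltW.
  by rewrite massZ z_mass1 mulr1.
have := a_best dev_mixed; rewrite !payoff_block !payoff_const massZ z_mass1.
rewrite payoffZl => dev_le.
by rewrite payoffZl -(ler_pM2l a1_pos) mulrA mulfV ?gt_eqF // mul1r; lra.
Qed.

End SumGame.
End Payoff.

Lemma restrict_norm_col (R : realFieldType) n n' (a : 'cV[R]_n) (b : 'cV[R]_n') :
  restrict_norm (col_mx a b) = (mass a)^-1 *: a.
Proof.
apply/matrixP => i j; rewrite (ord1 j) mxE [in RHS]mxE col_mxEu mulrC.
by congr (_^-1 * _); apply: eq_bigr => l _; rewrite col_mxEu.
Qed.

Lemma sum_lshift_col (R : realFieldType) n n' (a : 'cV[R]_n) (b : 'cV[R]_n') :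
  \sum_(l < n) col_mx a b (lshift n' l) 0 = mass a.
Proof. by apply: eq_bigr => l _; rewrite col_mxEu. Qed.

Lemma tr_sumB (R : realFieldType) n1 m1 n2 m2 (B1 : 'M[R]_(n1, m1))
    (B2 : 'M[R]_(n2, m2)) K :
  (sumB B1 B2 K)^T = block_mx B1^T (const_mx (- K)) (const_mx (- K)) B2^T.
Proof. by rewrite /sumB tr_block_mx !trmx_const. Qed.

Theorem theorem6 (R : realFieldType) (n1 m1 n2 m2 : nat)
  (A1 B1 : 'M[R]_(n1.+1, m1.+1)) (A2 B2 : 'M[R]_(n2.+1, m2.+1)) (K : R)
  (hK1 : forall i j, `|A1 i j| < K /\ `|B1 i j| < K)
  (hK2 : forall i j, `|A2 i j| < K /\ `|B2 i j| < K)
  (x : 'cV[R]_(n1.+1 + n2.+1)) (y : 'cV[R]_(m1.+1 + m2.+1)) :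
  nash_eq (sumA A1 A2 K) (sumB B1 B2 K) x y ->
  (0 < \sum_(l < n1.+1) x (lshift n2.+1 l) 0) /\
  (0 < \sum_(l < m1.+1) y (lshift m2.+1 l) 0) /\
  nash_eq A1 B1 (restrict_norm x) (restrict_norm y).
Proof.
rewrite -[x]vsubmxK -[y]vsubmxK.
move: (usubmx x) (dsubmx x) (usubmx y) (dsubmx y) => x1 x2 y1 y2.
rewrite !restrict_norm_col !sum_lshift_col nash_eqE tr_sumB.
move=> [x_mixed [y_mixed [x_best y_best]]].
have [x1_ge0 _ x_mass1] := iffLR (mixed_col _ _) x_mixed.
have [y1_ge0 _ y_mass1] := iffLR (mixed_col _ _) y_mixed.
have A2_lt i j : A2 i j < K by case: (hK2 i j) => /ltr_normlP[].
have B1_gt i j : - K < B1^T i j by rewrite mxE; case: (hK1 j i) => _ /ltr_normlP[? _]; rewrite ltrNl.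
have B2_gt i j : - K < B2^T i j by rewrite mxE; case: (hK2 j i) => _ /ltr_normlP[? _]; rewrite ltrNl.
have x2_mass0 := mass_down_eq0_of_offdiag_gt x_mixed y_mixed x_best A2_lt.
have y1_mass0 := mass_up_eq0_of_offdiag_lt y_mixed x_mixed y_best B2_gt.
have y2_mass0 := mass_down_eq0_of_offdiag_lt y_mixed x_mixed y_best B1_gt.
have x1_pos : 0 < mass x1.
  rewrite lt0r mass_ge0 // andbT; apply/eqP => x1_0.
  by have := x2_mass0 (y1_mass0 x1_0); lra.
have y1_pos : 0 < mass y1.
  rewrite lt0r mass_ge0 // andbT; apply/eqP => y1_0.
  by have := y2_mass0 (x2_mass0 y1_0); lra.
do 2!split=> //; apply/nash_eqE.
do 2!(split; first exact: mixed_normalize).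
split; apply: best_responseZ; rewrite ?invr_ge0 ?ltW //.
- exact: best_response_restrict_up x_mixed x_best x1_pos.
- exact: best_response_restrict_up y_mixed y_best y1_pos.
Qed.
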